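(* Let $\sigma$ be a signature. For any set $\Delta\cup\{\alpha\}$ of $\mathcal{CO}[\sigma]$-formulas, $\Delta\models^g\alpha$ if and only if $\Delta\models^c\alpha$.
   Context: A signature $\sigma=(\mathrm{Dom},\mathrm{Ran})$: $\mathrm{Dom}$ nonempty finite set of variables, each with nonempty finite range $\mathrm{Ran}(X)$; $\mathbf X=\mathbf x$ abbreviates $X_1=x_1\wedge\dots\wedge X_n=x_n$ ($\mathbf x\in\prod\mathrm{Ran}(X_i)$), inconsistent if it contains $X=x,X=x'$ with $x\ne x'$. $\mathcal{CO}[\sigma]$: $\alpha::=X=x\mid\neg\alpha\mid\alpha\wedge\alpha\mid\alpha\vee\alpha\mid\mathbf X=\mathbf x\;\Box\!\!\rightarrow\alpha$. Systems of functions $\mathcal F$: for each $V\in\mathrm{En}(\mathcal F)\subseteq\mathrm{Dom}$ parents $PA^{\mathcal F}_V\subseteq\mathrm{Dom}\setminus\{V\}$ and $\mathcal F_V:\mathrm{Ran}(PA^{\mathcal F}_V)\to\mathrm{Ran}(V)$; $\mathrm{Ex}(\mathcal F)=\mathrm{Dom}\setminus\mathrm{En}(\mathcal F)$; only recursive (acyclic parent graph). An assignment $s$ is compatible with $\mathcal F$ if $s(V)=\mathcal F_V(s(PA^{\mathcal F}_V))$ for $V\in\mathrm{En}(\mathcal F)$. For consistent $\mathbf X=\mathbf x$: $\mathcal F_{\mathbf X=\mathbf x}$ restricts $\mathcal F$ to $\mathrm{En}(\mathcal F)\setminus\mathbf X$; $s^{\mathcal F}_{\mathbf X=\mathbf x}$: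 $X_i\mapsto x_i$, $V\mapsto s(V)$ on $\mathrm{Ex}(\mathcal F)\setminus\mathbf X$, $V\mapsto\mathcal F_V(s^{\mathcal F}_{\mathbf X=\mathbf x}(PA^{\mathcal F}_V))$ on $\mathrm{En}(\mathcal F)\setminus\mathbf X$. Causal team $T=(T^-,\mathcal F)$ ($T^-$ a set of compatible assignments; empty team components identified as $\emptyset$); causal subteams $(S^-,\mathcal F)$, $S^-\subseteq T^-$; $T_{\mathbf X=\mathbf x}=(\{s^{\mathcal F}_{\mathbf X=\mathbf x}:s\in T^-\},\mathcal F_{\mathbf X=\mathbf x})$. $\models^c$: $T\models X=x$ iff $s(X)=x$ for all $s\in T^-$; $T\models\neg\alpha$ iff $(\{s\},\mathcal F)\not\models\alpha$ for all $s\in T^-$; $\wedge$ classical; $T\models\alpha\vee\beta$ iff causal subteams $T_1,T_2$ exist with $T_1^-\cup T_2^-=T^-$, $T_1\models\alpha$, $T_2\models\beta$; $T\models\mathbf X=\mathbf x\;\Box\!\!\rightarrow\alpha$ iff $\mathbf X=\mathbf x$ inconsistent or $T_{\mathbf X=\mathbf x}\models\alpha$. Generalized causal team: a set $T$ of compatible pairs $(s,\mathcal F)$ with $\mathcal F$ recursive; $T^-=\{s:(s,\mathcal F)\in T\}$; $T_{\mathbf X=\mathbf x}=\{(s^{\mathcal F}_{\mathbf X=\mathbf x},\mathcal F_{\mathbf X=\mathbf x}):(s,\mathcal F)\in T\}$; $\models^g$: same clauses except $T\models\neg\alpha$ iff $\{(s,\mathcal F)\}\not\models\alpha$ for all $(s,\mathcal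 F)\in T$, and $T\models\alpha\vee\beta$ iff $T=T_1\cup T_2$ with $T_1\models\alpha$, $T_2\models\beta$. $\Delta\models^c\alpha$: every causal team over $\sigma$ satisfying all of $\Delta$ satisfies $\alpha$; $\Delta\models^g\alpha$ likewise for generalized causal teams over $\sigma$. *)

From mathcomp Require Import all_boot.
From Stdlib Require List.

Set Implicit Arguments.
Unset Strict Implicit.
Unset Printing Implicit Defensive.

Record signature := Signature {
  Dom : finType;
  Ran : Dom -> finType
}.

Definition signature_ok (sg : signature) : Prop :=
  0 < #|Dom sg| /\ forall X : Dom sg, 0 < #|Ran X|.

Definition assign (sg : signature) := forall X : Dom sg, Ran X.

Definition eqn (sg : signature) := {X : Dom sg & Ran X}.

(* Formulas of CO[sigma].  A conjunction X1=x1 /\ ... /\ Xn=xn is the list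
   of its equations. *)
Inductive form (sg : signature) : Type :=
| FEq  : forall X : Dom sg, Ran X -> form sg
| FNeg : form sg -> form sg
| FAnd : form sg -> form sg -> form sg
| FOr  : form sg -> form sg -> form sg
| FCf  : seq (eqn sg) -> form sg -> form sg.

Definition consistent (sg : signature) (l : seq (eqn sg)) : Prop :=
  forall p q, List.In p l -> List.In q l -> projT1 p = projT1 q -> p = q.

Definition invars (sg : signature) (l : seq (eqn sg)) (V : Dom sg) : bool :=
  has (fun p => projT1 p == V) l.

Fixpoint ivval (sg : signature) (l : seq (eqn sg)) (V : Dom sg)
  : option (Ran V) :=
  match l with
  | [::] => None
  | p :: l' =>
    match projT1 p =P V with
    | ReflectT e => Some (eq_rect _ (fun X => Ran X : Type) (projT2 p) _ e)
    | ReflectF _ => ivval l' V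
    end
  end.

(* A system of functions: parents PA_V and, for endogenous V, a function
   F_V.  F_V is represented as a function on full assignments which depends
   only on the PA_V-coordinates (equivalently a function Ran(PA_V) -> Ran V).
   fn V = None means V is exogenous. *)
Record system (sg : signature) := System {
  pa : Dom sg -> {set Dom sg};
  fn : forall V : Dom sg, option (assign sg -> Ran V)
}.

Definition endo (sg : signature) (F : system sg) (V : Dom sg) : bool :=
  if fn F V is Some _ then true else false.

Definition parent_rel (sg : signature) (F : system sg) : rel (Dom sg) :=
  fun X V => endo F V && (X \in pa F V).

Definition wf_system (sg : signature) (F : system sg) : Prop :=
  (forall V, ~~ endo F V -> pa F V = set0) /\
  (forall V, V \notin pa F V) /\
  (forall V f, fn F V = Some f ->
     forall s t : assign sg, (forall X, X \in pa F V -> s X = t X) ->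
       f s = f t) /\
  (forall X V, parent_rel F X V -> ~~ connect (parent_rel F) V X).

Definition compatible (sg : signature) (F : system sg) (s : assign sg) : Prop :=
  forall V f, fn F V = Some f -> s V = f s.

Definition sys_do (sg : signature) (F : system sg) (l : seq (eqn sg))
  : system sg :=
  System (fun V => if invars l V then set0 else pa F V)
         (fun V => if invars l V then None else fn F V).

Definition do_step (sg : signature) (F : system sg) (l : seq (eqn sg))
  (s t : assign sg) : assign sg :=
  fun V => match ivval l V with
           | Some x => x
           | None => match fn F V with
                     | Some f => f t
                     | None => s V
                     end
           end.

(* s^F_{X=x}: for acyclic F, iterating #|Dom| times computes the recursive
   definition (each variable is fixed after (depth in the graph + 1) steps). *)
Definition do_assign (sg : signature) (F : system sg) (l : seq (eqn sg))
  (s : assign sg) : assign sg :=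
  iter #|Dom sg| (do_step F l s) s.

Fixpoint sat_c (sg : signature) (F : system sg) (T : assign sg -> Prop)
  (a : form sg) {struct a} : Prop :=
  match a with
  | FEq X x => forall s, T s -> s X = x
  | FNeg b => forall s, T s -> ~ sat_c F (fun t => t = s) b
  | FAnd b c => sat_c F T b /\ sat_c F T c
  | FOr b c => exists T1 T2 : assign sg -> Prop,
      (forall s, T1 s -> T s) /\ (forall s, T2 s -> T s) /\
      (forall s, T s -> T1 s \/ T2 s) /\
      sat_c F T1 b /\ sat_c F T2 c
  | FCf l b => consistent l ->
      sat_c (sys_do F l) (fun t => exists s, T s /\ t = do_assign F l s) b
  end.

Fixpoint sat_g (sg : signature) (T : assign sg -> system sg -> Prop)
  (a : form sg) {struct a} : Prop :=
  match a with
  | FEq X x => forall s F, T s F -> s X = x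
  | FNeg b => forall s F, T s F -> ~ sat_g (fun t G => t = s /\ G = F) b
  | FAnd b c => sat_g T b /\ sat_g T c
  | FOr b c => exists T1 T2 : assign sg -> system sg -> Prop,
      (forall s F, T1 s F -> T s F) /\ (forall s F, T2 s F -> T s F) /\
      (forall s F, T s F -> T1 s F \/ T2 s F) /\
      sat_g T1 b /\ sat_g T2 c
  | FCf l b => consistent l ->
      sat_g (fun t G => exists s F, T s F /\ t = do_assign F l s /\
                                    G = sys_do F l) b
  end.

Definition causal_team (sg : signature) (F : system sg) (T : assign sg -> Prop)
  : Prop := wf_system F /\ forall s, T s -> compatible F s.

Definition gen_team (sg : signature) (T : assign sg -> system sg -> Prop)
  : Prop := forall s F, T s F -> wf_system F /\ compatible F s.

Definition ent_c (sg : signature) (Delta : form sg -> Prop) (a : form sg)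
  : Prop :=
  forall F T, causal_team F T ->
    (forall d, Delta d -> sat_c F T d) -> sat_c F T a.

Definition ent_g (sg : signature) (Delta : form sg -> Prop) (a : form sg)
  : Prop :=
  forall T, gen_team T -> (forall d, Delta d -> sat_g T d) -> sat_g T a.

From mathcomp Require Import all_boot.

(** A causal team (T, F) is the generalized team pairing every s in T with
    F, and the two satisfaction relations agree on this encoding.  Moreover
    the generalized semantics is flat: a generalized team satisfies a formula
    iff each of its members (s, F), i.e. each singleton causal team ({s}, F),
    does.  So a countermodel in either semantics yields one in the other. *)

Section GeneralizedTeams.

Variable sg : signature.

Definition gteam_of (F : system sg) (T : assign sg -> Prop)
  : assign sg -> system sg -> Prop :=
  fun s G => T s /\ G = F.

Definition gsingleton (s : assign sg) (F : system sg)
  : assign sg -> system sg -> Prop :=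
  gteam_of F (fun t => t = s).

Lemma eq_sat_g (a : form sg) (T T' : assign sg -> system sg -> Prop) :
  (forall s F, T s F <-> T' s F) -> sat_g T a -> sat_g T' a.
Proof.
elim: a T T' => [X x|b IHb|b IHb c IHc|b IHb c IHc|l b IHb] T T' eqT /=.
- by move=> H s F /eqT; apply: H.
- by move=> H s F /eqT; apply: H.
- by case=> Hb Hc; split; [apply: IHb Hb | apply: IHc Hc].
- case=> [T1 [T2 [sub1 [sub2 [cover [Hb Hc]]]]]].
  exists T1, T2; split; first by move=> s F /sub1 /eqT.
  split; first by move=> s F /sub2 /eqT.
  by split=> // s F /eqT /cover.
- move=> H /H; apply: IHb => t G.
  by split=> -[s [F [/eqT HT eqs]]]; exists s, F.
Qed.

Lemma gsingletonxx (s : assign sg) (F : system sg) : gsingleton s F s F.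
Proof. by []. Qed.

Lemma sat_g_flat (a : form sg) (T : assign sg -> system sg -> Prop) :
  sat_g T a <-> (forall s F, T s F -> sat_g (gsingleton s F) a).
Proof.
elim: a T => [X x|b IHb|b IHb c IHc|b IHb c IHc|l b IHb] T /=.
- split=> [H s F HT t G [-> _] | H s F HT]; first exact: H HT.
  exact: H HT s F (gsingletonxx s F).
- split=> [H s F HT t G [-> ->] | H s F HT]; first exact: H HT.
  exact: H HT s F (gsingletonxx s F).
- split=> [[Hb Hc] s F HT | H].
    by split; [apply: (IHb T).1 Hb s F HT | apply: (IHc T).1 Hc s F HT].
  by split; [apply/IHb | apply/IHc] => s F /H [].
- split=> [[T1 [T2 [sub1 [sub2 [cover [Hb Hc]]]]]] s F HT | H].
    have emptyb : sat_g (fun _ _ => False) b by apply/IHb.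
    have emptyc : sat_g (fun _ _ => False) c by apply/IHc.
    case: (cover s F HT) => [/((IHb T1).1 Hb) Hs | /((IHc T2).1 Hc) Hs].
      exists (gsingleton s F), (fun _ _ => False).
      by do 3!split=> //; move=> t G [-> ->]; left.
    exists (fun _ _ => False), (gsingleton s F).
    by do 3!split=> //; move=> t G [-> ->]; right.
  exists (fun s F => T s F /\ sat_g (gsingleton s F) b),
         (fun s F => T s F /\ sat_g (gsingleton s F) c).
  do 2![split; first by move=> s F []].
  split; last by split; [apply/IHb | apply/IHc] => s F [].
  move=> s F HT; case: (H s F HT) => [U1 [U2 [sub1 [sub2 [cover [Hb Hc]]]]]].
  case: (cover s F (gsingletonxx s F)) => [U1s | U2s].
    by left; split=> //; apply: eq_sat_g Hb => t G; split=> [/sub1 | [-> ->]].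
  by right; split=> //; apply: eq_sat_g Hc => t G; split=> [/sub2 | [-> ->]].
- split=> [H s F HT cons | H cons]; apply/IHb.
    move=> _ _ [_ [_ [[-> ->] [-> ->]]]].
    by apply: (IHb _).1 (H cons) _ _ _; exists s, F.
  move=> _ _ [s [F [HT [-> ->]]]].
  by apply: (IHb _).1 (H s F HT cons) _ _ _; exists s, F.
Qed.

Lemma sat_c_gteam (a : form sg) (F : system sg) (T : assign sg -> Prop) :
  sat_c F T a <-> sat_g (gteam_of F T) a.
Proof.
elim: a F T => [X x|b IHb|b IHb c IHc|b IHb c IHc|l b IHb] F T /=.
- by split=> [H s G [HT _] | H s HT]; [apply: H | apply: (H s F)].
- by split=> [H s G [HT ->] /IHb | H s HT /IHb]; [apply: H | apply: (H s F)].
- by split=> -[Hb Hc]; split; [apply/IHb | apply/IHc | apply/IHb | apply/IHc].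
- split=> [[T1 [T2 [sub1 [sub2 [cover [Hb Hc]]]]]]
          | [U1 [U2 [sub1 [sub2 [cover [Hb Hc]]]]]]].
    exists (gteam_of F T1), (gteam_of F T2).
    split; first by move=> s G [/sub1 HT ->].
    split; first by move=> s G [/sub2 HT ->].
    split; last by split; [apply/IHb | apply/IHc].
    by move=> s G [/cover [] HT ->]; [left | right].
  exists (U1^~ F), (U2^~ F).
  split; first by move=> s /sub1 [].
  split; first by move=> s /sub2 [].
  split; first by move=> s HT; apply: cover.
  split; [apply/IHb; apply: eq_sat_g Hb | apply/IHc; apply: eq_sat_g Hc] => s G.
    by split=> [U1sG | [U1sF ->]] //; case: (sub1 _ _ U1sG) => _ eqG; rewrite -eqG.
  by split=> [U2sG | [U2sF ->]] //; case: (sub2 _ _ U2sG) => _ eqG; rewrite -eqG.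
- split=> H cons; [move/IHb: (H cons) | apply/IHb; move: (H cons)];
    apply: eq_sat_g => t G; split.
  + by move=> [[s [HT ->]] ->]; exists s, F.
  + by move=> [s [_ [[HT ->] [-> ->]]]]; split=> //; exists s.
  + by move=> [s [_ [[HT ->] [-> ->]]]]; split=> //; exists s.
  + by move=> [[s [HT ->]] ->]; exists s, F.
Qed.

Lemma gen_team_of_causal (F : system sg) (T : assign sg -> Prop) :
  causal_team F T -> gen_team (gteam_of F T).
Proof. by case=> wfF compT s G [/compT ? ->]. Qed.

Lemma causal_team_of_gen_member (T : assign sg -> system sg -> Prop) s F :
  gen_team T -> T s F -> causal_team F (fun t => t = s).
Proof. by move=> genT /genT [wfF compF]; split=> // t ->. Qed.

End GeneralizedTeams.

Theorem corollary2p17 (sg : signature) (Hsg : signature_ok sg)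
  (Delta : form sg -> Prop) (alpha : form sg) :
  ent_g Delta alpha <-> ent_c Delta alpha.
Proof.
split=> [entg F T causalT DeltaT | entc T genT DeltaT].
  apply/sat_c_gteam; apply: entg; first exact: gen_team_of_causal.
  by move=> d /DeltaT /sat_c_gteam.
apply/sat_g_flat => s F TsF.
apply/sat_c_gteam; apply: entc.
  exact: causal_team_of_gen_member genT TsF.
by move=> d /DeltaT /sat_g_flat /(_ s F TsF) /sat_c_gteam.
Qed.
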